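(* Let $\mathcal T\in\Sigma^n$ be a text. The permutations $\pi,\bar\pi$ defined as $\pi(i)=\mathrm{ISA}[i]$ and $\bar\pi(i)=n-\mathrm{ISA}[i]+1$ for $i\in[n]$ are order-preserving for $\mathcal T$. Furthermore, $|\mathtt{st\text{-}lex}^-|\le r$ and $|\mathtt{st\text{-}lex}^+|\le r$.
   Context: A text is a string $\mathcal T\in\Sigma^n$ over an integer alphabet whose last symbol $\mathcal T[n]=\$$ occurs only there and is smallest. $\mathrm{ISA}[i]$ is the rank of the suffix $\mathcal T[i,n]$ among all suffixes of $\mathcal T$ in lexicographic order. A permutation $\pi:[n]\to[n]$ is order-preserving for $\mathcal T$ if for all $i,j\in[n-1]$, $\pi(i)<\pi(j)$ and $\mathcal T[i,i+1]=\mathcal T[j,j+1]$ imply $\pi(i+1)<\pi(j+1)$. For $i\ne j$, $\mathrm{rlce}(i,j)$ is the length of the longest common prefix of $\mathcal T[i,n]$ and $\mathcal T[j,n]$; $\mathrm{LPF}_\pi[i]=0$ if $\pi(i)=1$, else $\mathrm{LPF}_\pi[i]=\max_{\pi(j)<\pi(i)}\mathrm{rlce}(j,i)$; $\mathrm{PDA}_\pi$ is the set $\{i+\mathrm{LPF}_\pi[i]:i\in[n]\}$ sorted colexicographically by the prefixes $\mathcal T[1,j]$. $\mathtt{st\text{-}lex}^-=\mathrm{PDA}_\pi$ and $\mathtt{st\text{-}lex}^+=\mathrm{PDA}_{\bar\pi}$. $r$ is the number of maximal equal-letter runs in $\mathrm{BWT}(\mathcal T)$, obtained by sorting all rotations of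 $\mathcal T$ lexicographically and concatenating their last characters. *)

From mathcomp Require Import all_boot.
Set Implicit Arguments. Unset Strict Implicit. Unset Printing Implicit Defensive.

(* Texts are sequences over an integer alphabet, here [nat].
   Positions are 1-indexed as in the paper: T[i] = nth 0 T (i-1),
   T[i,n] = drop (i-1) T, T[1,j] = take j T. *)

(* A text: nonempty, and its last symbol $ is strictly smaller than every
   other symbol (hence occurs only at the end and is smallest). *)
Definition is_text (T : seq nat) : Prop :=
  0 < size T /\ forall i, i < (size T).-1 -> last 0 T < nth 0 T i.

Definition tchar (T : seq nat) (i : nat) : nat := nth 0 T i.-1.
Definition suf (T : seq nat) (i : nat) : seq nat := drop i.-1 T.

Fixpoint lexlt (s t : seq nat) : bool :=
  match s, t with
  | _, [::] => false
  | [::], _ :: _ => true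
  | x :: s', y :: t' => (x < y) || ((x == y) && lexlt s' t')
  end.
Definition lexle (s t : seq nat) : bool := (s == t) || lexlt s t.

Definition ISA (T : seq nat) (i : nat) : nat :=
  (count (fun j => lexlt (suf T j) (suf T i)) (iota 1 (size T))).+1.

Definition is_perm_on (n : nat) (pi : nat -> nat) : Prop :=
  perm_eq (map pi (iota 1 n)) (iota 1 n).

Definition order_preserving (T : seq nat) (pi : nat -> nat) : Prop :=
  forall i j, 1 <= i <= (size T).-1 -> 1 <= j <= (size T).-1 ->
    pi i < pi j -> tchar T i = tchar T j -> tchar T i.+1 = tchar T j.+1 ->
    pi i.+1 < pi j.+1.

Fixpoint lcp (s t : seq nat) : nat :=
  match s, t with
  | x :: s', y :: t' => if x == y then (lcp s' t').+1 else 0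
  | _, _ => 0
  end.

Definition rlce (T : seq nat) (i j : nat) : nat := lcp (suf T i) (suf T j).

Definition LPF (T : seq nat) (pi : nat -> nat) (i : nat) : nat :=
  if pi i == 1 then 0
  else \max_(1 <= j < (size T).+1 | pi j < pi i) rlce T j i.

Definition colex_le (T : seq nat) (a b : nat) : bool :=
  lexle (rev (take a T)) (rev (take b T)).

Definition PDA (T : seq nat) (pi : nat -> nat) : seq nat :=
  sort (colex_le T) (undup [seq i + LPF T pi i | i <- iota 1 (size T)]).

Definition pi_minus (T : seq nat) (i : nat) : nat := ISA T i.
Definition pi_plus (T : seq nat) (i : nat) : nat := size T - ISA T i + 1.

Definition st_lex_minus (T : seq nat) : seq nat := PDA T (pi_minus T).
Definition st_lex_plus (T : seq nat) : seq nat := PDA T (pi_plus T).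

Definition BWT (T : seq nat) : seq nat :=
  [seq last 0 r | r <- sort lexle [seq rot k T | k <- iota 0 (size T)]].

Definition runs (s : seq nat) : nat :=
  match s with
  | [::] => 0
  | x :: s' => (count id (pairmap (fun a b => a != b) x s')).+1
  end.

Definition bwt_r (T : seq nat) : nat := runs (BWT T).

From mathcomp Require Import all_boot zify.
Set Implicit Arguments. Unset Strict Implicit. Unset Printing Implicit Defensive.

(* ISA ranks the suffixes lexicographically, so two suffixes that start with
   the same letter keep their relative order once that letter is dropped, and
   for lexicographically sorted strings s < t < u we have
   lcp s u = min (lcp s t) (lcp t u).  Both facts survive reversing the ranks,
   so the argument applies to pi and to pi-bar alike.
   For such a pi, let j be the position ranked just before k+1.  If the letters
   cyclically preceding j and k+1 agree (k+1 is not the head of a run of the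
   BWT read in pi-order), then j-1 is ranked before k and
   LPF[k] = LPF[k+1] + 1, i.e. k + LPF[k] = (k+1) + LPF[k+1].  So every value
   i + LPF[i] is already attained at a run head, and there are r of those
   (the BWT is read backwards for pi-bar, which has the same runs). *)

Lemma lexlt_irr s : lexlt s s = false.
Proof. by elim: s => //= x s ->; rewrite ltnn eqxx. Qed.

Lemma lexlt_trans s t u : lexlt s t -> lexlt t u -> lexlt s u.
Proof.
elim: s t u => [|x s IH] [|y t] [|z u] //=.
case/orP=> [xy|/andP[/eqP-> st]]; case/orP=> [yz|/andP[/eqP<- tu]].
- by rewrite (ltn_trans xy yz).
- by rewrite xy.
- by rewrite yz.
- by rewrite eqxx (IH _ _ st tu) orbT.
Qed.

Lemma lexlt_asym s t : lexlt s t -> lexlt t s = false.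
Proof. by move=> st; apply/negbTE/negP=> /(lexlt_trans st); rewrite lexlt_irr. Qed.

Lemma lexlt_total s t : s != t -> lexlt s t || lexlt t s.
Proof.
elim: s t => [|x s IH] [|y t] //=.
case: (ltngtP x y) => //= ->; rewrite ?eqxx /= => st.
by apply: IH; apply: contra st => /eqP->.
Qed.

Lemma lexle_trans : transitive lexle.
Proof.
move=> t s u /orP[/eqP->//|st] /orP[/eqP<-|tu]; first by rewrite /lexle st orbT.
by rewrite /lexle (lexlt_trans st tu) orbT.
Qed.

Lemma lexle_total : total lexle.
Proof.
move=> s t; rewrite /lexle; case: (eqVneq s t) => [->|st] //=.
exact: lexlt_total.
Qed.

Lemma lcpC s t : lcp s t = lcp t s.
Proof. by elim: s t => [|x s IH] [|y t] //=; rewrite (eq_sym y) IH. Qed.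

Lemma lcp_leq_size s t : lcp s t <= size s.
Proof. by elim: s t => [|x s IH] [|y t] //=; case: eqP; rewrite ?ltnS. Qed.

Lemma nth_lcp s t p : p < lcp s t -> nth 0 s p = nth 0 t p.
Proof. by elim: s t p => [|x s IH] [|y t] [|p] //=; case: eqP => // _; apply: IH. Qed.

Lemma lcp_lexlt_minn s t u :
  lexlt s t -> lexlt t u -> lcp s u = minn (lcp s t) (lcp t u).
Proof.
elim: s t u => [|x s IH] [|y t] [|z u] //=; first by rewrite min0n.
case/orP=> [xy|/andP[/eqP<- st]]; case/orP=> [xz|/andP[/eqP<- tu]].
- by rewrite (ltn_eqF xy) (ltn_eqF (ltn_trans xy xz)) min0n.
- by rewrite (ltn_eqF xy) min0n.
- by rewrite (ltn_eqF xz) minn0.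
- by rewrite !eqxx (IH t) // minnSS.
Qed.

Lemma lexlt_cat s t u v : lcp s t < size s -> lcp s t < size t ->
  lexlt (s ++ u) (t ++ v) = lexlt s t.
Proof.
elim: s t => [|x s IH] [|y t] //=.
by case: eqP => [->|] //= ? ?; rewrite ltnn IH.
Qed.

Lemma count_ltn_sub (X : Type) (a1 a2 : pred X) (s : seq X) :
  subpred a1 a2 -> has (predD a2 a1) s -> count a1 s < count a2 s.
Proof.
move=> sub12; elim: s => //= x s IH /orP[/andP[/negbTE-> ->]|/IH lt12].
  by rewrite ltnS sub_count.
by case a1x: (a1 x); rewrite ?(sub12 _ a1x) //= ?ltnS ?addSn //; apply: ltn_addl.
Qed.

Section Suffixes.

Variable T : seq nat.
Local Notation n := (size T).

Lemma suf_cons i : 1 <= i <= n -> suf T i = tchar T i :: suf T i.+1.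
Proof. by case: i => // i /andP[_ iT]; rewrite /suf /tchar (drop_nth 0). Qed.

Lemma size_suf i : size (suf T i) = n - i.-1.
Proof. exact: size_drop. Qed.

Lemma nth_suf i p : nth 0 (suf T i) p = nth 0 T (i.-1 + p).
Proof. exact: nth_drop. Qed.

Lemma suf_inj i j : 1 <= i <= n -> 1 <= j <= n -> suf T i = suf T j -> i = j.
Proof. by move=> hi hj /(congr1 size); rewrite !size_suf; lia. Qed.

Lemma rlce_cons i j : 1 <= i <= n -> 1 <= j <= n ->
  rlce T i j = if tchar T i == tchar T j then (rlce T i.+1 j.+1).+1 else 0.
Proof. by move=> hi hj; rewrite /rlce (suf_cons hi) (suf_cons hj). Qed.

Lemma ISA_ltn_lexlt i k : 1 <= i <= n -> 1 <= k <= n ->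
  lexlt (suf T i) (suf T k) -> ISA T i < ISA T k.
Proof.
move=> hi hk ik; rewrite /ISA ltnS; apply: count_ltn_sub.
  by move=> j /lexlt_trans; apply.
by apply/hasP; exists i; rewrite ?mem_iota /= ?lexlt_irr ?ik //; lia.
Qed.

Lemma ISA_ltn i k : 1 <= i <= n -> 1 <= k <= n ->
  (ISA T i < ISA T k) = lexlt (suf T i) (suf T k).
Proof.
move=> hi hk; apply/idP/idP; last exact: ISA_ltn_lexlt.
case: (eqVneq i k) => [->|ik]; first by rewrite ltnn.
have /lexlt_total/orP[//|ki] : suf T i != suf T k by apply: contra_neq ik; apply: suf_inj.
by rewrite ltnNge ltnW // ISA_ltn_lexlt.
Qed.

Lemma ISA_inj i k : 1 <= i <= n -> 1 <= k <= n -> ISA T i = ISA T k -> i = k.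
Proof.
move=> hi hk eik; apply/eqP/negPn/negP => ik.
have /lexlt_total/orP[] : suf T i != suf T k by apply: contra_neq ik; apply: suf_inj.
- by move/(ISA_ltn_lexlt hi hk); rewrite eik ltnn.
- by move/(ISA_ltn_lexlt hk hi); rewrite eik ltnn.
Qed.

Lemma ISA_range i : 1 <= i <= n -> 1 <= ISA T i <= n.
Proof.
move=> hi; rewrite /ISA /=.
have {2}<- : count predT (iota 1 n) = n by rewrite count_predT size_iota.
apply: count_ltn_sub => //; apply/hasP; exists i; rewrite ?mem_iota /= ?lexlt_irr //; lia.
Qed.

Hypothesis HT : is_text T.

Lemma tchar_last_ltn i : 1 <= i < n -> tchar T n < tchar T i.
Proof. by case: HT => n0 Hlast hi; rewrite /tchar nth_last Hlast //; lia. Qed.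

Lemma tchar_eq_last i : 1 <= i <= n -> tchar T i = tchar T n -> i = n.
Proof.
move=> hi e; case: (ltngtP i n) => [iT||//]; last lia.
by have := tchar_last_ltn (i := i); rewrite e ltnn; lia.
Qed.

(* The unique end-marker makes the suffixes prefix-free. *)
Lemma lcp_suf_ltn_size i j : 1 <= i <= n -> 1 <= j <= n -> i != j ->
  lcp (suf T i) (suf T j) < size (suf T i).
Proof.
move=> hi hj ij; rewrite ltnNge; apply/negP => le_i.
have le_j := lcp_leq_size (suf T j) (suf T i); rewrite lcpC in le_j.
have := leq_trans le_i le_j; rewrite size_suf in le_i; rewrite !size_suf => ji.
have e : tchar T (j + (n - i)) = tchar T n.
  rewrite /tchar (_ : (j + (n - i)).-1 = j.-1 + (n - i)); last lia.
  rewrite -nth_suf -(nth_lcp (s := suf T i)); last lia.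
  by rewrite nth_suf; congr nth; lia.
by have := tchar_eq_last _ e; lia.
Qed.

End Suffixes.

Section PermOn.

Variables (n : nat) (pi : nat -> nat).

Lemma perm_on_of_inj :
  (forall i, 1 <= i <= n -> 1 <= pi i <= n) ->
  (forall i k, 1 <= i <= n -> 1 <= k <= n -> pi i = pi k -> i = k) ->
  is_perm_on n pi.
Proof.
move=> pi_range pi_inj.
have uniq_pi : uniq (map pi (iota 1 n)).
  rewrite map_inj_in_uniq ?iota_uniq // => a b; rewrite !mem_iota => ha hb.
  by apply: pi_inj; lia.
have sub_pi : {subset map pi (iota 1 n) <= iota 1 n}.
  by move=> x /mapP[i]; rewrite !mem_iota => hi ->; have := pi_range i; lia.
apply: (uniq_perm uniq_pi (iota_uniq 1 n)).
by case: (uniq_min_size uniq_pi sub_pi _); rewrite ?size_map.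
Qed.

Hypothesis pi_perm : is_perm_on n pi.

Lemma perm_on_range i : 1 <= i <= n -> 1 <= pi i <= n.
Proof.
move=> hi; have : pi i \in iota 1 n by rewrite -(perm_mem pi_perm) map_f // mem_iota; lia.
by rewrite mem_iota; lia.
Qed.

Lemma perm_on_inj i k : 1 <= i <= n -> 1 <= k <= n -> pi i = pi k -> i = k.
Proof.
have /(uniqP 0) nth_inj : uniq (map pi (iota 1 n)) by rewrite (perm_uniq pi_perm) iota_uniq.
move=> hi hk e; suff : i.-1 = k.-1 by lia.
apply: nth_inj; rewrite ?unfold_in /= ?size_map ?size_iota;
  rewrite ?(nth_map 0) ?size_iota ?nth_iota; try lia.
by rewrite !add1n !prednK //; lia.
Qed.

Lemma perm_on_surj k : 1 <= k <= n -> exists2 i, 1 <= i <= n & pi i = k.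
Proof.
move=> hk; have : k \in map pi (iota 1 n) by rewrite (perm_mem pi_perm) mem_iota; lia.
by case/mapP=> i; rewrite mem_iota => hi ->; exists i => //; lia.
Qed.

End PermOn.

Definition strongly_order_preserving (T : seq nat) (pi : nat -> nat) : Prop :=
  forall i j, 1 <= i < size T -> 1 <= j < size T ->
    tchar T i = tchar T j -> pi i < pi j -> pi i.+1 < pi j.+1.

Definition rlce_monotone (T : seq nat) (pi : nat -> nat) : Prop :=
  forall a b c, 1 <= a <= size T -> 1 <= b <= size T -> 1 <= c <= size T ->
    pi a < pi b -> pi b < pi c -> rlce T a c <= rlce T b c.

Lemma strongly_order_preserving_weaken T pi :
  strongly_order_preserving T pi -> order_preserving T pi.
Proof. by move=> pi_shift i j hi hj lt e _; apply: pi_shift => //; lia. Qed.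

Section SuffixRankPermutations.

Variable T : seq nat.
Local Notation n := (size T).

Lemma pi_plus_ISA i : 1 <= i <= n -> pi_plus T i = n - (ISA T i).-1.
Proof. by move=> /ISA_range; rewrite /pi_plus; lia. Qed.

Lemma pi_minus_perm : is_perm_on n (pi_minus T).
Proof. exact: perm_on_of_inj (@ISA_range T) (@ISA_inj T). Qed.

Lemma pi_plus_perm : is_perm_on n (pi_plus T).
Proof.
apply: perm_on_of_inj => [i hi|i k hi hk]; rewrite !pi_plus_ISA //.
  by have := ISA_range hi; lia.
by move=> e; apply: (ISA_inj hi hk); have := ISA_range hi; have := ISA_range hk; lia.
Qed.

Lemma pi_minus_strong : strongly_order_preserving T (pi_minus T).
Proof.
move=> i j hi hj e; rewrite /pi_minus !ISA_ltn; try lia.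
by rewrite (suf_cons (i := i)) ?(suf_cons (i := j)) ?e /= ?ltnn ?eqxx //; lia.
Qed.

Lemma pi_plus_strong : strongly_order_preserving T (pi_plus T).
Proof.
move=> i j hi hj e; rewrite !pi_plus_ISA; try lia.
have [] : [/\ 1 <= ISA T i <= n, 1 <= ISA T j <= n,
  1 <= ISA T i.+1 <= n & 1 <= ISA T j.+1 <= n] by split; apply: ISA_range; lia.
have := pi_minus_strong hj hi (esym e); rewrite /pi_minus; lia.
Qed.

Lemma pi_minus_rlce : rlce_monotone T (pi_minus T).
Proof.
move=> a b c ha hb hc; rewrite /pi_minus /rlce !ISA_ltn // => ab bc.
by rewrite (lcp_lexlt_minn ab bc) geq_minr.
Qed.

Lemma pi_plus_rlce : rlce_monotone T (pi_plus T).
Proof.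
move=> a b c ha hb hc; rewrite !pi_plus_ISA // => ab bc.
have [[ra rb] rc] := (ISA_range ha, ISA_range hb, ISA_range hc).
have cb : lexlt (suf T c) (suf T b) by rewrite -ISA_ltn //; lia.
have ba : lexlt (suf T b) (suf T a) by rewrite -ISA_ltn //; lia.
by rewrite /rlce lcpC (lcpC (suf T b)) (lcp_lexlt_minn cb ba) geq_minl.
Qed.

End SuffixRankPermutations.

Definition prev_char (T : seq nat) (i : nat) : nat :=
  if i == 1 then tchar T (size T) else tchar T i.-1.

Definition run_head (B : nat -> nat) (k : nat) : bool := (k == 1) || (B k != B k.-1).

Section PDABound.

Variables (T : seq nat) (pi B : nat -> nat).
Local Notation n := (size T).

Hypotheses (HT : is_text T) (pi_perm : is_perm_on n pi).
Hypotheses (pi_strong : strongly_order_preserving T pi) (pi_rlce : rlce_monotone T pi).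
Hypothesis B_pi : forall i, 1 <= i <= n -> B (pi i) = prev_char T i.

Lemma LPF_ge i j : 1 <= i <= n -> 1 <= j <= n -> pi j < pi i -> rlce T j i <= LPF T pi i.
Proof.
move=> hi hj lt_ji; have rj := perm_on_range pi_perm hj.
rewrite /LPF ifN; last by apply/eqP; lia.
by apply: (leq_bigmax_seq j) => //; rewrite mem_index_iota; lia.
Qed.

Lemma LPF_le i m : (forall j, 1 <= j <= n -> pi j < pi i -> rlce T j i <= m) ->
  LPF T pi i <= m.
Proof.
move=> le_m; rewrite /LPF; case: eqP => // _.
by apply/bigmax_leqP_seq => j; rewrite mem_index_iota => hj; apply: le_m; lia.
Qed.

Lemma LPF_leq_succ k : 1 <= k < n -> LPF T pi k <= (LPF T pi k.+1).+1.
Proof.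
move=> hk; apply: LPF_le => j hj lt_jk; rewrite rlce_cons //; last lia.
case: eqP => // e; have jn : j < n.
  rewrite ltn_neqAle andbC; apply/andP; split; first lia.
  by apply/eqP=> jn; move: e; rewrite jn => /esym/(tchar_eq_last HT); lia.
by rewrite ltnS LPF_ge ?pi_strong //; lia.
Qed.

Lemma LPF_le_rlce_pred i j : 1 <= i <= n -> 1 <= j <= n -> pi j = (pi i).-1 ->
  LPF T pi i <= rlce T j i.
Proof.
move=> hi hj e_ji; apply: LPF_le => l hl lt_li.
case: (eqVneq l j) => [->//|lj].
have [rl ri] := (perm_on_range pi_perm hl, perm_on_range pi_perm hi).
have ne : pi l <> pi j by move/(perm_on_inj pi_perm hl hj)/eqP; rewrite (negbTE lj).
by apply: pi_rlce => //; lia.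
Qed.

Lemma pi_pred_prev_char k j : 1 <= k < n -> 1 <= j <= n -> pi j = (pi k.+1).-1 ->
  prev_char T k.+1 = prev_char T j -> [/\ 1 < j, tchar T j.-1 = tchar T k & pi j.-1 < pi k].
Proof.
move=> hk hj e_pi; rewrite /prev_char ifN /=; last by apply/eqP; lia.
case: eqP => [->|j1] e_char.
  by have := tchar_eq_last HT (i := k) _ e_char; lia.
have j_gt1 : 1 < j by lia.
split=> //.
have rj := perm_on_range pi_perm hj.
have rk1 := perm_on_range pi_perm (i := k.+1) ltac:(lia).
case: (ltngtP (pi j.-1) (pi k)) => // [lt_kj|e_jk].
  have := pi_strong (i := k) (j := j.-1) ltac:(lia) ltac:(lia) e_char lt_kj.
  by rewrite prednK; lia.
have := perm_on_inj pi_perm (i := j.-1) (k := k) ltac:(lia) ltac:(lia) e_jk.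
by move/(congr1 succn); rewrite prednK ?(ltnW j_gt1) // => e_j; move: e_pi; rewrite e_j; lia.
Qed.

Lemma LPF_phrase_continues k : 1 <= k < n -> ~~ run_head B (pi k.+1) ->
  k + LPF T pi k = k.+1 + LPF T pi k.+1.
Proof.
rewrite /run_head negb_or negbK => hk /andP[/eqP pi_k1 /eqP e_B].
have r_k1 := perm_on_range pi_perm (i := k.+1) ltac:(lia).
have [|j hj e_pi] := perm_on_surj pi_perm (k := (pi k.+1).-1); first lia.
have e_prev : prev_char T k.+1 = prev_char T j by rewrite -(B_pi hj) -B_pi ?e_pi //; lia.
have [j_gt1 e_char lt_jk] := pi_pred_prev_char hk hj e_pi e_prev.
have := LPF_ge (i := k) (j := j.-1) ltac:(lia) ltac:(lia) lt_jk.
rewrite rlce_cons ?e_char ?eqxx ?prednK; try lia.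
have := LPF_le_rlce_pred (i := k.+1) ltac:(lia) hj e_pi.
have := LPF_leq_succ hk; lia.
Qed.

Lemma run_head_pi1 : run_head B (pi 1).
Proof.
have n0 : 0 < n by case: HT.
apply/negP => /negP; rewrite /run_head negb_or negbK => /andP[/eqP pi1 /eqP e_B].
have r1 := perm_on_range pi_perm (i := 1) ltac:(lia).
have [|j hj e_pi] := perm_on_surj pi_perm (k := (pi 1).-1); first lia.
have j1 : j != 1 by apply/eqP => j1; move: e_pi; rewrite j1; lia.
move: e_B; rewrite -e_pi !B_pi // /prev_char eqxx (negbTE j1).
by move/esym/(tchar_eq_last HT); lia.
Qed.

Lemma PDA_value_at_run_head i : 1 <= i <= n ->
  i + LPF T pi i \in [seq k + LPF T pi k | k <- iota 1 n & run_head B (pi k)].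
Proof.
elim: i => [|k IH] hk; first lia.
case head_k1: (run_head B (pi k.+1)).
  by apply: map_f; rewrite mem_filter head_k1 mem_iota; lia.
case: (posnP k) => [k0|k_gt0]; first by move: head_k1; rewrite k0 run_head_pi1.
by rewrite -LPF_phrase_continues ?head_k1 ?IH //; lia.
Qed.

Lemma size_PDA_leq_runs_count :
  size (PDA T pi) <= count (run_head B) (iota 1 n).
Proof.
rewrite /PDA size_sort -(permP pi_perm) count_map -size_filter.
rewrite -[X in _ <= X](size_map (fun k => k + LPF T pi k)).
apply: uniq_leq_size (undup_uniq _) _ => x; rewrite mem_undup => /mapP[i].
by rewrite mem_iota => hi ->; apply: PDA_value_at_run_head.
Qed.

End PDABound.

Lemma runs_cons2 x y s : runs [:: x, y & s] = (x != y) + runs (y :: s).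
Proof. by rewrite /runs /= addnS. Qed.

Lemma runs_rcons x s y : runs (rcons (x :: s) y) = runs (x :: s) + (last x s != y).
Proof. by rewrite /runs /= -cats1 pairmap_cat count_cat /= addn0 addSn. Qed.

Lemma runs_rev s : runs (rev s) = runs s.
Proof.
elim: s => [|x [|y s] IH] //; rewrite rev_cons.
case E: (rev (y :: s)) => [|z t]; first by move/(congr1 size): E; rewrite size_rev.
rewrite runs_rcons -E IH runs_cons2 addnC eq_sym; congr (_ + _); congr (~~ (_ == _)).
by move/(congr1 (last 0)): E; rewrite rev_cons last_rcons /= => ->.
Qed.

Lemma runs_map_iota1 (B : nat -> nat) n : 0 < n ->
  runs (map B (iota 1 n)) = count (run_head B) (iota 1 n).
Proof.
suff runs_iota a m :
    runs (map B (iota a m.+1)) = (count (fun k => B k != B k.-1) (iota a.+1 m)).+1.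
  case: n => // m _; rewrite runs_iota /= add1n; congr _.+1.
  by apply: eq_in_count => k; rewrite mem_iota /run_head => hk; case: eqP => //; lia.
elim: m a => [|m IH] a //.
rewrite [map B _]/= runs_cons2 -[B a.+1 :: _]/(map B (iota a.+1 m.+1)) IH.
by rewrite addnS eq_sym.
Qed.

Lemma count_lexlt_sorted (S : seq (seq nat)) x : sorted lexle S -> x \in S ->
  count (lexlt ^~ x) S = index x S.
Proof.
move=> sorted_S xS; set m := index x S.
have x_notin : x \notin take m S by apply/negP => /index_ltn; rewrite ltnn.
have eS : S = take m S ++ x :: drop m.+1 S by rewrite -drop_index // cat_take_drop.
move: sorted_S; rewrite eS sorted_pairwise; last exact: lexle_trans.
rewrite pairwise_cat /= allrel_consr => /and4P[/andP[le_x _] _ x_le _].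
rewrite count_cat /= lexlt_irr add0n.
have -> : count (lexlt ^~ x) (drop m.+1 S) = 0.
  apply/eqP; rewrite -leqn0 leqNgt -has_count; apply/hasPn => y /(allP x_le).
  by case/orP=> [/eqP->|/lexlt_asym->]; rewrite ?lexlt_irr.
have size_m : size (take m S) = m by rewrite size_takel // index_size.
rewrite addn0 -[RHS]size_m; apply/eqP; rewrite -all_count.
apply/allP => y y_in; have /orP[/eqP ey|//] := allP le_x y y_in.
by move: x_notin; rewrite -ey y_in.
Qed.

Section BWT.

Variable T : seq nat.
Local Notation n := (size T).
Hypothesis HT : is_text T.

Lemma rot_lexlt a b : 1 <= a <= n -> 1 <= b <= n ->
  lexlt (rot a.-1 T) (rot b.-1 T) = lexlt (suf T a) (suf T b).
Proof.
move=> ha hb; case: (eqVneq a b) => [->|ab]; first by rewrite !lexlt_irr.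
rewrite /rot lexlt_cat // ?lcp_suf_ltn_size // lcpC lcp_suf_ltn_size //.
by rewrite eq_sym.
Qed.

Lemma last_rot i : 1 <= i <= n -> last 0 (rot i.-1 T) = prev_char T i.
Proof.
move=> hi; rewrite /prev_char; case: eqP => [->|i1]; first by rewrite rot0 /tchar nth_last.
rewrite -nth_last size_rot /rot nth_cat size_drop ltnNge ifN; last lia.
by rewrite nth_take /tchar; [congr nth|]; lia.
Qed.

Lemma size_BWT : size (BWT T) = n.
Proof. by rewrite size_map size_sort size_map size_iota. Qed.

Lemma nth_BWT_ISA i : 1 <= i <= n -> nth 0 (BWT T) (ISA T i).-1 = prev_char T i.
Proof.
move=> hi; set rots := [seq rot k T | k <- iota 0 n]; set S := sort lexle rots.
have xS : rot i.-1 T \in S by rewrite mem_sort; apply: map_f; rewrite mem_iota; lia.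
have rank_i : (ISA T i).-1 = index (rot i.-1 T) S.
  rewrite -count_lexlt_sorted ?sort_sorted //; last exact: lexle_total.
  rewrite (permP (permEl (perm_sort lexle rots))) count_map /= (iotaDl 1 0) count_map.
  by apply: eq_in_count => k; rewrite mem_iota => hk /=; rewrite -rot_lexlt //; lia.
by rewrite rank_i (nth_map [::]) ?index_mem // nth_index // last_rot.
Qed.

End BWT.

Lemma map_nth_iota1 (s : seq nat) : [seq nth 0 s k.-1 | k <- iota 1 (size s)] = s.
Proof. by rewrite (iotaDl 1 0) -map_comp; exact: mkseq_nth. Qed.

Lemma map_nth_rev_iota1 (s : seq nat) :
  [seq nth 0 s (size s - k) | k <- iota 1 (size s)] = rev s.
Proof.
apply: (@eq_from_nth _ 0) => [|k]; rewrite size_map size_iota ?size_rev // => hk.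
by rewrite (nth_map 0) ?size_iota // nth_iota // nth_rev //; congr nth; lia.
Qed.

Theorem lemma17 (T : seq nat) (HT : is_text T) :
  [/\ is_perm_on (size T) (pi_minus T), is_perm_on (size T) (pi_plus T),
      order_preserving T (pi_minus T) & order_preserving T (pi_plus T)] /\
  size (st_lex_minus T) <= bwt_r T /\ size (st_lex_plus T) <= bwt_r T.
Proof.
have n0 : 0 < size T by case: HT.
split; first split.
- exact: pi_minus_perm.
- exact: pi_plus_perm.
- exact/strongly_order_preserving_weaken/pi_minus_strong.
- exact/strongly_order_preserving_weaken/pi_plus_strong.
rewrite /bwt_r /st_lex_minus /st_lex_plus -[in X in _ /\ X]runs_rev; split.
- rewrite -(map_nth_iota1 (BWT T)) size_BWT runs_map_iota1 //.
  apply: (size_PDA_leq_runs_count HT (pi_minus_perm T) (@pi_minus_strong T) (@pi_minus_rlce T)).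
  exact: nth_BWT_ISA.
- rewrite -(map_nth_rev_iota1 (BWT T)) size_BWT runs_map_iota1 //.
  apply: (size_PDA_leq_runs_count HT (pi_plus_perm T) (@pi_plus_strong T) (@pi_plus_rlce T)).
  move=> i hi; rewrite pi_plus_ISA // -nth_BWT_ISA //.
  by congr nth; have := ISA_range hi; lia.
Qed.
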